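(* For every value of the memory parameter $p\ge0$, there exist instances of the dynamics described in the context satisfying (A1)–(A3), in which every $A^t$ is a user best response to $H^t$ and every $H^{t+1}$ lies in $\arg\min_{H\in\mathcal H^m}L^t(H)$ but the service tie-breaking is not required to be sticky, together with a time $t$ such that $(H^t,A^t)$ is zero-loss while $(H^\tau,A^\tau)$ is not zero-loss for some $\tau>t$. In other words, without sticky tie-breaking, a zero-loss state at time $t$ does not guarantee zero-loss states at later times.
   Context: Setting. There are $n\ge 1$ users and $m\ge 1$ services. User $i\in\{1,\dots,n\}$ has fixed features $x_i\in\mathcal X$ and a fixed label $y_i\in\{+1,-1\}$. $\mathcal H$ is a set of classifiers $h:\mathcal X\to\{+1,-1\}$. There is a utility $u:\mathcal X\times\mathcal H\to\mathbb R$ (written $u(x,h)$) and a loss $\ell:\mathcal H\times\mathcal X\times\{+1,-1\}\to\mathbb R$ satisfying: (A1) for any $h_1,h_2\in\mathcal H$ and $x\in\mathcal X$ with $h_1(x)=-1$ and $h_2(x)=+1$, we have $u(x,h_1)\le 0<u(x,h_2)$; (A2) for all $h\in\mathcal H$ the loss is non-negative, $-y\,\ell(h,x,y)$ is strictly monotonically increasing with $u(x,h)$, and there exists $v>0$ such that $u(x,h)=0$ implies $\ell(h,x,y)=v$; (A3) (realizability) there is $h\in\mathcal H$ with $\ell(h,x_i,y_i)=0$ for all $i=1,\dots,n$. Dynamics. Fix $q>1$ and $p\ge 0$. A state at time $t$ is $(H^t,A^t)$ with $H^t=(h^t_1,\dots,h^t_m)\in\mathcal H^m$ and $A^t\in\mathbb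 R_+^{n\times m}$. Given classifiers $H$, a user best response is any $A\in\arg\max_{A\in\mathbb R_+^{n\times m}}\sum_{i=1}^n\big[\sum_{j=1}^m A_{ij}u(x_i,h_j)-\frac1q(\sum_{j=1}^m A_{ij})^q\big]$. Memory: $M^{-1}=0$ and $M^t=\frac{A^t}{1+p}+\frac{pM^{t-1}}{1+p}$ for $t\ge0$. Define $L^t(H)=\sum_{j=1}^m\sum_{i=1}^n\frac{M^t_{ij}}{\sum_{k=1}^n M^t_{kj}}\ell(h_j,x_i,y_i)$, with the fraction taken to be $0$ when $\sum_k M^t_{kj}=0$. Sticky tie-breaking (not imposed here) would mean: whenever $L^{t-1}(H^t)=L^t(H^t)$, $H^{t+1}=H^t$. $H^0$ is arbitrary. Zero-loss. A state $(H,A)$ is zero-loss if every service $j$ satisfies: (1) $A_{ij}\ell(h_j,x_i,y_i)=0$ for all $i$, and (2) $u(x_i,h_j)\le 0$ for all $i$ with $y_i=-1$. *)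

From Stdlib Require Import Reals Lra.
Open Scope R_scope.

Inductive sgn : Type := Pos | Neg.
Definition sgnR (s : sgn) : R := match s with Pos => 1 | Neg => -1 end.

Fixpoint rsum (n : nat) (f : nat -> R) : R :=
  match n with O => 0 | S k => rsum k f + f k end.

Definition rpow (x q : R) : R := if Rle_dec x 0 then 0 else Rpower x q.

Section Model.
Context (X : Type).
Notation Cls := (X -> sgn).

Definition assumption_A1 (HS : Cls -> Prop) (u : X -> Cls -> R) : Prop :=
  forall h1 h2 x, HS h1 -> HS h2 -> h1 x = Neg -> h2 x = Pos ->
    u x h1 <= 0 /\ 0 < u x h2.

Definition assumption_A2 (HS : Cls -> Prop) (u : X -> Cls -> R)
  (l : Cls -> X -> sgn -> R) : Prop :=
  (forall h x y, HS h -> 0 <= l h x y) /\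
  (forall h1 h2 x y, HS h1 -> HS h2 -> u x h1 < u x h2 ->
     - sgnR y * l h1 x y < - sgnR y * l h2 x y) /\
  (exists v, 0 < v /\ forall h x y, HS h -> u x h = 0 -> l h x y = v).

Definition assumption_A3 (HS : Cls -> Prop) (l : Cls -> X -> sgn -> R)
  (n : nat) (xs : nat -> X) (ys : nat -> sgn) : Prop :=
  exists h, HS h /\ forall i, (i < n)%nat -> l h (xs i) (ys i) = 0.

Definition user_obj (u : X -> Cls -> R) (n m : nat) (xs : nat -> X) (q : R)
  (H : nat -> Cls) (A : nat -> nat -> R) : R :=
  rsum n (fun i => rsum m (fun j => A i j * u (xs i) (H j))
                   - / q * rpow (rsum m (fun j => A i j)) q).

Definition nonneg_alloc (n m : nat) (A : nat -> nat -> R) : Prop :=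
  forall i j, (i < n)%nat -> (j < m)%nat -> 0 <= A i j.

Definition best_response (u : X -> Cls -> R) (n m : nat) (xs : nat -> X)
  (q : R) (H : nat -> Cls) (A : nat -> nat -> R) : Prop :=
  nonneg_alloc n m A /\
  forall A', nonneg_alloc n m A' ->
    user_obj u n m xs q H A' <= user_obj u n m xs q H A.

(* Mprev p A t = M^{t-1}; Mprev p A 0 = M^{-1} = 0. *)
Fixpoint Mprev (p : R) (A : nat -> nat -> nat -> R) (t : nat) : nat -> nat -> R :=
  match t with
  | O => fun _ _ => 0
  | S k => fun i j => A k i j / (1 + p) + p * Mprev p A k i j / (1 + p)
  end.
Definition Mem (p : R) (A : nat -> nat -> nat -> R) (t : nat) : nat -> nat -> R :=
  Mprev p A (S t).

Definition wgt (n : nat) (M : nat -> nat -> R) (i j : nat) : R :=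
  let s := rsum n (fun k => M k j) in
  if Req_EM_T s 0 then 0 else M i j / s.

Definition Lmem (l : Cls -> X -> sgn -> R) (n m : nat) (xs : nat -> X)
  (ys : nat -> sgn) (M : nat -> nat -> R) (H : nat -> Cls) : R :=
  rsum m (fun j => rsum n (fun i => wgt n M i j * l (H j) (xs i) (ys i))).

Definition in_HSm (HS : Cls -> Prop) (m : nat) (H : nat -> Cls) : Prop :=
  forall j, (j < m)%nat -> HS (H j).

(* A trajectory (H^t, A^t)_t of the dynamics, without sticky tie-breaking. *)
Definition dynamics (HS : Cls -> Prop) (u : X -> Cls -> R)
  (l : Cls -> X -> sgn -> R) (n m : nat) (xs : nat -> X) (ys : nat -> sgn)
  (q p : R) (H : nat -> nat -> Cls) (A : nat -> nat -> nat -> R) : Prop :=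
  in_HSm HS m (H 0%nat) /\
  (forall t, best_response u n m xs q (H t) (A t)) /\
  (forall t, in_HSm HS m (H (S t)) /\
     forall H', in_HSm HS m H' ->
       Lmem l n m xs ys (Mem p A t) (H (S t)) <= Lmem l n m xs ys (Mem p A t) H').

Definition zero_loss (u : X -> Cls -> R) (l : Cls -> X -> sgn -> R)
  (n m : nat) (xs : nat -> X) (ys : nat -> sgn)
  (H : nat -> Cls) (A : nat -> nat -> R) : Prop :=
  forall j, (j < m)%nat ->
    (forall i, (i < n)%nat -> A i j * l (H j) (xs i) (ys i) = 0) /\
    (forall i, (i < n)%nat -> ys i = Neg -> u (xs i) (H j) <= 0).

End Model.

(** A single negatively labelled user and a single service.  At time 0 the
    service rejects the user, who therefore stays away: the state is
    zero-loss, but the memory is empty, so [L^0] vanishes identically and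
    every classifier minimises it.  Without sticky tie-breaking the service
    may switch to the classifier accepting the user, who then joins it and is
    misclassified, so the state at time 1 is not zero-loss. *)

From Stdlib Require Import Reals Lra Lia.
Open Scope R_scope.

Lemma rsum_ge0 n f : (forall i, (i < n)%nat -> 0 <= f i) -> 0 <= rsum n f.
Proof.
  induction n as [|n IH]; intros Hf; simpl; [lra|].
  apply Rplus_le_le_0_compat; [apply IH; intros i Hi|]; apply Hf; lia.
Qed.

Lemma rsum_eq0 n f : (forall i, (i < n)%nat -> f i = 0) -> rsum n f = 0.
Proof.
  induction n as [|n IH]; intros Hf; simpl; [reflexivity|].
  rewrite IH, Hf; [ring | lia | intros i Hi; apply Hf; lia].
Qed.

Lemma rpow_sqr x : 0 <= x -> rpow x 2 = x * x.
Proof.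
  intros Hx; unfold rpow; destruct (Rle_dec x 0); [nra|].
  replace 2 with (INR 2) by (simpl; ring).
  rewrite Rpower_pow by lra; simpl; ring.
Qed.

Section BestResponse.
Variables (X : Type) (u : X -> (X -> sgn) -> R) (xs : nat -> X) (H : nat -> X -> sgn).

Lemma best_response_single_quadratic :
  best_response X u 1 1 xs 2 H (fun i j => Rmax (u (xs i) (H j)) 0).
Proof.
  split; [intros i j _ _; apply Rmax_r|].
  intros A' HA'; specialize (HA' 0%nat 0%nat ltac:(lia) ltac:(lia)).
  unfold user_obj; cbn [rsum]; rewrite !Rplus_0_l.
  rewrite !rpow_sqr by (apply Rmax_r || exact HA').
  generalize dependent (A' 0%nat 0%nat); generalize (u (xs 0%nat) (H 0%nat)).
  intros w a Ha; destruct (Rle_lt_dec 0 w) as [Hw|Hw].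
  - rewrite Rmax_left by lra; pose proof (Rle_0_sqr (a - w)); unfold Rsqr in *; lra.
  - rewrite Rmax_right by lra; nra.
Qed.

End BestResponse.

Section ServiceLoss.
Variables (X : Type) (l : (X -> sgn) -> X -> sgn -> R) (n m : nat)
  (xs : nat -> X) (ys : nat -> sgn).

Lemma Mprev_ge0 p A :
  0 <= p -> (forall t i j, 0 <= A t i j) -> forall t i j, 0 <= Mprev p A t i j.
Proof.
  intros Hp HA t; induction t as [|t IH]; intros i j; simpl; [lra|].
  specialize (HA t i j); specialize (IH i j).
  unfold Rdiv; apply Rplus_le_le_0_compat; apply Rmult_le_pos;
    try (left; apply Rinv_0_lt_compat); nra.
Qed.

Lemma wgt_ge0 M i j : (forall i j, 0 <= M i j) -> 0 <= wgt n M i j.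
Proof.
  intros HM; unfold wgt; destruct Req_EM_T as [|Hs]; [lra|].
  assert (0 < rsum n (fun k => M k j)).
  { pose proof (rsum_ge0 n (fun k => M k j) (fun k _ => HM k j)); lra. }
  unfold Rdiv; apply Rmult_le_pos; [apply HM | left; apply Rinv_0_lt_compat; lra].
Qed.

Lemma Lmem_ge0 M H :
  (forall h x y, 0 <= l h x y) -> (forall i j, 0 <= M i j) ->
  0 <= Lmem X l n m xs ys M H.
Proof.
  intros Hl HM; apply rsum_ge0; intros j _; apply rsum_ge0; intros i _.
  apply Rmult_le_pos; [apply wgt_ge0, HM | apply Hl].
Qed.

Lemma Lmem_zero_memory M H : (forall i j, M i j = 0) -> Lmem X l n m xs ys M H = 0.
Proof.
  intros HM; apply rsum_eq0; intros j _; apply rsum_eq0; intros i _.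
  unfold wgt; destruct Req_EM_T as [|Hs]; [ring|].
  exfalso; apply Hs, rsum_eq0; intros k _; apply HM.
Qed.

Lemma Lmem_zero_loss M H :
  (forall i j, (i < n)%nat -> (j < m)%nat -> l (H j) (xs i) (ys i) = 0) ->
  Lmem X l n m xs ys M H = 0.
Proof.
  intros Hl; apply rsum_eq0; intros j Hj; apply rsum_eq0; intros i Hi.
  rewrite Hl by assumption; ring.
Qed.

Lemma Lmem_argmin_of_zero M H :
  (forall h x y, 0 <= l h x y) -> (forall i j, 0 <= M i j) ->
  Lmem X l n m xs ys M H = 0 ->
  forall H', Lmem X l n m xs ys M H <= Lmem X l n m xs ys M H'.
Proof. intros Hl HM H0 H'; rewrite H0; apply Lmem_ge0; assumption. Qed.

End ServiceLoss.

Definition sign_utility {X : Type} (x : X) (h : X -> sgn) : R := sgnR (h x).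

(* The loss is [0] on a correct prediction and [2] otherwise; since
   [sgnR y ^ 2 = 1], [- y * loss = u - y] is increasing in the utility. *)
Definition sign_loss {X : Type} (h : X -> sgn) (x : X) (y : sgn) : R :=
  1 - sgnR y * sgnR (h x).

Lemma sign_loss_ge0 {X : Type} (h : X -> sgn) x y : 0 <= sign_loss h x y.
Proof. unfold sign_loss; destruct y, (h x); simpl; lra. Qed.

Lemma sign_utility_A1 X HS : assumption_A1 X HS sign_utility.
Proof.
  intros h1 h2 x _ _ E1 E2; unfold sign_utility; rewrite E1, E2; simpl; lra.
Qed.

(* The utility never vanishes, so the last clause of (A2) holds for any [v]. *)
Lemma sign_loss_A2 X HS : assumption_A2 X HS sign_utility sign_loss.
Proof.
  unfold sign_utility, sign_loss; split; [|split].
  - intros h x y _; apply sign_loss_ge0.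
  - intros h1 h2 x y _ _ Hlt; destruct y; simpl; lra.
  - exists 1; split; [lra|].
    intros h x y _ Hu; destruct (h x); simpl in Hu; lra.
Qed.

Definition switching_services (t j : nat) : unit -> sgn :=
  fun _ => match t with 1%nat => Pos | _ => Neg end.

Definition participation (t i j : nat) : R :=
  Rmax (sign_utility tt (switching_services t j)) 0.

Lemma participation_ge0 t i j : 0 <= participation t i j.
Proof. apply Rmax_r. Qed.

Lemma participation_at0 i j : participation 0 i j = 0.
Proof. unfold participation, sign_utility; simpl; apply Rmax_right; lra. Qed.

Lemma switching_dynamics p :
  0 <= p ->
  dynamics unit (fun _ => True) sign_utility sign_loss 1 1 (fun _ => tt)
    (fun _ => Neg) 2 p switching_services participation.
Proof.
  intros Hp; split; [intros j _; exact I|]; split.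
  - intros t; apply best_response_single_quadratic.
  - intros t; split; [intros j _; exact I|]; intros H' _.
    apply Lmem_argmin_of_zero.
    + apply sign_loss_ge0.
    + apply Mprev_ge0; [exact Hp | apply participation_ge0].
    + destruct t as [|t].
      * apply Lmem_zero_memory; intros i j; unfold Mem; simpl.
        rewrite participation_at0; field; lra.
      * apply Lmem_zero_loss; intros i j _ _; unfold sign_loss; simpl; ring.
Qed.

Theorem proposition3 :
  forall p : R, 0 <= p ->
  exists (X : Type) (HS : (X -> sgn) -> Prop) (u : X -> (X -> sgn) -> R)
         (l : (X -> sgn) -> X -> sgn -> R)
         (n m : nat) (xs : nat -> X) (ys : nat -> sgn) (q : R)
         (H : nat -> nat -> (X -> sgn)) (A : nat -> nat -> nat -> R),
    (1 <= n)%nat /\ (1 <= m)%nat /\ 1 < q /\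
    assumption_A1 X HS u /\ assumption_A2 X HS u l /\ assumption_A3 X HS l n xs ys /\
    dynamics X HS u l n m xs ys q p H A /\
    exists t tau : nat, (t < tau)%nat /\
      zero_loss X u l n m xs ys (H t) (A t) /\
      ~ zero_loss X u l n m xs ys (H tau) (A tau).
Proof.
  intros p Hp.
  exists unit, (fun _ => True), sign_utility, sign_loss, 1%nat, 1%nat,
    (fun _ => tt), (fun _ => Neg), 2, switching_services, participation.
  split; [lia|]; split; [lia|]; split; [lra|].
  split; [apply sign_utility_A1|]; split; [apply sign_loss_A2|].
  split.
  { exists (fun _ => Neg); split; [exact I|].
    intros i _; unfold sign_loss; simpl; ring. }
  split; [apply switching_dynamics, Hp|].
  exists 0%nat, 1%nat; split; [lia|]; split.
  - intros j _; split.
    + intros i _; rewrite participation_at0; ring.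
    + intros i _ _; unfold sign_utility; simpl; lra.
  - intros Hzl; destruct (Hzl 0%nat ltac:(lia)) as [_ Hneg].
    specialize (Hneg 0%nat ltac:(lia) eq_refl).
    unfold sign_utility in Hneg; simpl in Hneg; lra.
Qed.
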